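(* Every binary $t$-break-resilient code $\mathcal{C}\subseteq\{0,1\}^n$ satisfies $n-\log_2|\mathcal{C}|\ge \Omega\!\left(t\log \frac{n}{t}\right)$.
   Context: Breaking a binary string $\mathbf{x}\in\{0,1\}^n$ at $s\le t$ positions means choosing $s$ cut points between consecutive entries, producing $s+1$ consecutive substrings called fragments; fragments are oriented (read left to right as in $\mathbf{x}$) but given as an unordered multiset. A code $\mathcal{C}\subseteq\{0,1\}^n$ is a $t$-break-resilient code ($t$-BRC) if for any two distinct codewords $\mathbf{x},\mathbf{y}\in\mathcal{C}$, no choice of at most $t$ break positions in $\mathbf{x}$ and at most $t$ break positions in $\mathbf{y}$ yields the same multiset of fragments. The quantity $n-\log_2|\mathcal{C}|$ is the redundancy of $\mathcal{C}$; the $\Omega$ is asymptotic in $n$, with $t$ allowed to depend on $n$. *)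

From Stdlib Require Import Reals.
From mathcomp Require Import all_boot.
Set Implicit Arguments. Unset Strict Implicit. Unset Printing Implicit Defensive.

(* A set of break positions for a word of length n: S : {set 'I_n};
   i \in S means a cut between entries x_(i-1) and x_i (0-indexed),
   so position 0 is not a valid cut. *)
Definition valid_cuts (n : nat) (S : {set 'I_n}) : bool :=
  [forall i in S, 0 < nat_of_ord i].

Definition fragments (n : nat) (x : n.-tuple bool) (S : {set 'I_n}) : seq (seq bool) :=
  let p := sort leq [seq nat_of_ord i | i <- enum S] in
  pairmap (fun a b => take (b - a) (drop a (tval x))) 0 (rcons p n).

(* t-break-resilient code: for distinct codewords, no choice of at most t
   breaks in each yields the same multiset of fragments (multiset equality
   = perm_eq of the fragment lists). *)
Definition is_BRC (n t : nat) (C : {set n.-tuple bool}) : Prop :=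
  forall x y : n.-tuple bool, x \in C -> y \in C -> x != y ->
  forall Sx Sy : {set 'I_n},
    valid_cuts Sx -> valid_cuts Sy -> #|Sx| <= t -> #|Sy| <= t ->
    ~ perm_eq (fragments x Sx) (fragments y Sy).

(* Cut a word into k blocks of length L followed by a remainder. Rotating every
   block cyclically does not change the multiset of fragments obtained by cutting
   at the block boundaries and once inside each block, which takes at most
   2k - 1 cuts (plus one before a nonempty remainder). Hence a t-BRC with 2k <= t
   contains at most one word from each class of words that agree up to rotating
   their blocks. Counting pairs (codeword, rotation amounts) by their
   rotated images, and using that an aperiodic block has L distinct rotations
   while periodic blocks are rare, gives |C| L^k <= 2^(n+k), i.e. a redundancy
   of at least k (log L - 1). Taking k = min(max(1, t/2), n/16) yields
   Omega(t log(n/t)). *)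

From Stdlib Require Import Reals Lra Psatz.
From mathcomp Require Import all_boot zify.
Set Implicit Arguments. Unset Strict Implicit. Unset Printing Implicit Defensive.

Lemma eq_in_pairmap (A B : Type) (P : pred A) (f g : A -> A -> B) x s :
  P x -> all P s -> (forall a b, P a -> P b -> f a b = g a b) ->
  pairmap f x s = pairmap g x s.
Proof. by elim: s x => //= y s IH x Px /andP[Py Ps] fg; rewrite fg // (IH y). Qed.

Lemma pairmap_addn (B : Type) (f : nat -> nat -> B) d a s :
  pairmap f (d + a) (map (addn d) s) = pairmap (fun a b => f (d + a) (d + b)) a s.
Proof. by elim: s a => //= y s IH a; rewrite IH. Qed.

Section Cutting.
Variable T : eqType.
Implicit Types (u v w : seq T) (cs : seq nat).

Definition frag w cs : seq (seq T) :=
  pairmap (fun a b => take (b - a) (drop a w)) 0 (rcons cs (size w)).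

Definition cut_list (N : nat) cs : bool := path ltn 0 (rcons cs N).

Lemma cut_listP N cs : cut_list N cs ->
  [/\ sorted ltn cs, all (fun c => 0 < c) cs & all (fun c => c < N) cs].
Proof.
move=> cut_cs; have sorted_csN : sorted ltn (rcons cs N) by apply: path_sorted cut_cs.
move: cut_cs; rewrite /cut_list rcons_path path_sortedE; last exact: ltn_trans.
case/andP=> /andP[-> ->] _; split=> //.
move: sorted_csN; rewrite sorted_pairwise -?cats1 ?pairwise_cat; last exact: ltn_trans.
by case/and3P; rewrite allrel1r.
Qed.

Lemma cut_list_cat N1 N2 cs1 cs2 : cut_list N1 cs1 -> cut_list N2 cs2 ->
  cut_list (N1 + N2) (cs1 ++ N1 :: map (addn N1) cs2).
Proof.
rewrite /cut_list rcons_cat rcons_cons -cat_rcons cat_path => -> /= cut_cs2.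
rewrite last_rcons -map_rcons -{1}(addn0 N1) path_map.
by apply: sub_path cut_cs2 => a b; rewrite /= ltn_add2l.
Qed.

Lemma frag_cut1 w d : d <= size w -> frag w [:: d] = [:: take d w; drop d w].
Proof.
by move=> le_d; rewrite /frag /= subn0 drop0 [take _ (drop _ _)]take_oversize // size_drop.
Qed.

Lemma frag_cat w1 w2 cs1 cs2 : all (fun c => c <= size w1) cs1 ->
  frag (w1 ++ w2) (cs1 ++ size w1 :: map (addn (size w1)) cs2) = frag w1 cs1 ++ frag w2 cs2.
Proof.
move=> cs1_le; rewrite /frag size_cat -cat_rcons rcons_cat -map_rcons pairmap_cat last_rcons.
congr (_ ++ _).
  apply: (@eq_in_pairmap _ _ (fun c => c <= size w1)); rewrite ?all_rcons ?leqnn //.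
  move=> a b le_a le_b; rewrite drop_cat; case: ltnP => lt_a.
    by rewrite takel_cat // size_drop leq_sub2r.
  by rewrite (_ : b - a = 0) ?take0 //; lia.
rewrite -{1}(addn0 (size w1)) pairmap_addn.
apply: (@eq_in_pairmap _ _ predT); rewrite ?all_predT // => a b _ _.
by rewrite drop_cat ltnNge leq_addr addKn subnDl.
Qed.

Definition break_equiv (c : nat) u v : Prop :=
  exists cu cv, [/\ cut_list (size u) cu, cut_list (size v) cv,
    size cu <= c, size cv <= c & perm_eq (frag u cu) (frag v cv)].

Lemma break_equiv_le c c' u v : c <= c' -> break_equiv c u v -> break_equiv c' u v.
Proof.
move=> le_cc' [cu [cv [cut_u cut_v le_cu le_cv perm_uv]]].
by exists cu, cv; split=> //; apply: leq_trans le_cc'.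
Qed.

Lemma break_equiv_refl w : 0 < size w -> break_equiv 0 w w.
Proof. by move=> w_gt0; exists [::], [::]; rewrite /cut_list /= w_gt0. Qed.

Lemma break_equiv_rot d w : 0 < size w -> break_equiv 1 w (rot d w).
Proof.
move=> w_gt0; have [/andP[d_gt0 d_lt]|d_out] := boolP (0 < d < size w); last first.
  have [->|d_ge] : d = 0 \/ size w <= d by move: d_out; lia.
    by rewrite rot0; apply: (@break_equiv_le 0); last exact: break_equiv_refl.
  by rewrite rot_oversize //; apply: (@break_equiv_le 0); last exact: break_equiv_refl.
exists [:: d], [:: size w - d]; split=> //.
- by rewrite /cut_list /= d_gt0 d_lt.
- by rewrite /cut_list /= size_rot subn_gt0 d_lt ltn_subrL d_gt0 w_gt0.
rewrite frag_cut1 ?frag_cut1 ?size_rot ?leq_subr 1?ltnW //.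
rewrite /rot -(size_drop d) take_size_cat // drop_size_cat //.
by rewrite perm_sym (perm_catC [:: _]).
Qed.

Lemma break_equiv_cat c1 c2 u1 u2 v1 v2 :
  break_equiv c1 u1 v1 -> break_equiv c2 u2 v2 ->
  break_equiv (c1 + c2).+1 (u1 ++ u2) (v1 ++ v2).
Proof.
move=> [cu1 [cv1 [cut_u1 cut_v1 le_cu1 le_cv1 perm1]]].
move=> [cu2 [cv2 [cut_u2 cut_v2 le_cu2 le_cv2 perm2]]].
have le_cut N cs : cut_list N cs -> all (fun c => c <= N) cs.
  by case/cut_listP=> _ _ /allP lt_N; apply/allP=> c /lt_N /ltnW.
exists (cu1 ++ size u1 :: map (addn (size u1)) cu2).
exists (cv1 ++ size v1 :: map (addn (size v1)) cv2).
split; rewrite ?size_cat ?cut_list_cat //= ?size_map ?addnS ?ltnS ?leq_add //.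
by rewrite !frag_cat ?le_cut // perm_cat.
Qed.

Lemma break_equiv_flatten c k (f g : nat -> seq T) : 0 < k ->
  (forall i, i < k -> break_equiv c (f i) (g i)) ->
  break_equiv (c.+1 * k).-1 (flatten (map f (iota 0 k))) (flatten (map g (iota 0 k))).
Proof.
elim: k => // k IH _ fg.
have [->|k_gt0] := posnP k; first by rewrite /= !cats0 muln1; apply: fg.
rewrite -[k.+1]addn1 iotaD !map_cat !flatten_cat /= !cats0.
apply: break_equiv_le (break_equiv_cat (IH k_gt0 _) (fg k _)) => //; first lia.
by move=> i lt_ik; apply: fg; apply: ltnW.
Qed.

End Cutting.

Lemma fragments_cut_list n (x : n.-tuple bool) (cs : seq nat) : cut_list n cs ->
  let S := [set i : 'I_n | val i \in cs] in
  [/\ valid_cuts S, #|S| = size cs & fragments x S = frag x cs].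
Proof.
case/cut_listP=> cs_sorted cs_gt0 cs_lt S.
have S_cs : perm_eq [seq val i | i <- enum S] cs.
  apply: uniq_perm; first by rewrite map_inj_uniq ?enum_uniq //; exact: val_inj.
    exact: sorted_uniq ltn_trans ltnn _ cs_sorted.
  move=> c; apply/mapP/idP => [[i]|cs_c]; first by rewrite mem_enum inE => ? ->.
  by exists (Ordinal (allP cs_lt c cs_c)); rewrite // mem_enum inE.
split.
- by apply/forallP=> i; apply/implyP; rewrite inE => /(allP cs_gt0).
- by rewrite cardE -(size_map val) (perm_size S_cs).
rewrite /fragments /frag size_tuple; congr (pairmap _ _ (rcons _ _)).
apply: (sorted_eq leq_trans anti_leq); rewrite ?perm_sort //.
  exact: sort_sorted leq_total _.
by move: cs_sorted; rewrite ltn_sorted_uniq_leq => /andP[].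
Qed.

Lemma BRC_break_equiv_eq n t (C : {set n.-tuple bool}) (x y : n.-tuple bool) :
  is_BRC t C -> x \in C -> y \in C -> break_equiv t x y -> x = y.
Proof.
move=> C_BRC xC yC [cx [cy]]; rewrite !size_tuple => -[Hx Hy Hcx Hcy Hp].
have [Vx Cx Fx] := fragments_cut_list x Hx; have [Vy Cy Fy] := fragments_cut_list y Hy.
apply/eqP/negPn/negP => xy.
by apply: (C_BRC x y xC yC xy _ _ Vx Vy); rewrite ?Cx ?Cy ?Fx ?Fy.
Qed.

Lemma rot_rot_ex (T : Type) m n (s : seq T) : exists d, rot m (rot n s) = rot d s.
Proof.
by rewrite (rot_minn n) (rot_minn m) size_rot; eexists; apply: rot_add_mod; apply: geq_minr.
Qed.

Lemma rot_eq_rot_ex (T : Type) a b (u v : seq T) : rot a u = rot b v -> exists d, v = rot d u.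
Proof. by move=> uv; rewrite -(rotK b v) -uv /rotr; apply: rot_rot_ex. Qed.

Section Blocks.
Variables (T : eqType) (L : nat).
Implicit Types (x y : seq T).

Definition block x (i : nat) : seq T := take L (drop (i * L) x).

Lemma size_block x i : i.+1 * L <= size x -> size (block x i) = L.
Proof. by move=> le_x; rewrite size_takel // size_drop leq_subRL ?mulSn //; lia. Qed.

Lemma flatten_blocks x j : flatten [seq block x i | i <- iota 0 j] = take (j * L) x.
Proof.
elim: j => [|j IH]; first by rewrite take0.
by rewrite -addn1 iotaD map_cat flatten_cat IH /= cats0 mulnDl mul1n takeD.
Qed.

Lemma break_equiv_rot_blocks k x y : 0 < k -> 0 < L -> k * L <= size x ->
  (forall i, i < k -> exists d, block y i = rot d (block x i)) ->
  drop (k * L) x = drop (k * L) y ->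
  break_equiv ((2 * k).-1 + (drop (k * L) x != [::])) x y.
Proof.
move=> k_gt0 L_gt0 le_x rot_xy drop_xy.
have take_xy : break_equiv (2 * k).-1 (take (k * L) x) (take (k * L) y).
  rewrite -!flatten_blocks; apply: break_equiv_flatten => // i lt_ik.
  have [d ->] := rot_xy i lt_ik; apply: break_equiv_rot.
  by rewrite size_block // (leq_trans _ le_x) // leq_mul2r lt_ik orbT.
rewrite -[x in break_equiv _ x](cat_take_drop (k * L)).
rewrite -[y in break_equiv _ _ y](cat_take_drop (k * L)) -drop_xy.
case: (drop (k * L) x) => [|b r] /=; first by rewrite !cats0 addn0.
rewrite addn1 -[(2 * k).-1.+1]addn0.
by apply: break_equiv_cat => //; apply: break_equiv_refl.
Qed.

End Blocks.

Lemma rot_fixed_nth (T : Type) (x0 : T) j (s : seq T) i :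
  rot j s = s -> j <= i < size s -> nth x0 s i = nth x0 s (i - j).
Proof.
move=> fix_s /andP[le_ji lt_is].
by rewrite -{2}fix_s /rot nth_cat size_drop ifT ?nth_drop ?subnKC //; lia.
Qed.

Lemma rot_fixed_eq (T : eqType) j (s1 s2 : seq T) : 0 < j -> size s1 = size s2 ->
  rot j s1 = s1 -> rot j s2 = s2 -> take j s1 = take j s2 -> s1 = s2.
Proof.
move=> j_gt0 eq_size fix1 fix2 eq_take.
case: s1 eq_size fix1 eq_take => [|x0 s1] eq_size fix1 eq_take.
  by case: s2 eq_size {fix2 eq_take}.
apply: (eq_from_nth (x0 := x0) eq_size) => i.
elim/ltn_ind: i => i IH lt_i; have [lt_ij|le_ji] := ltnP i j.
  by rewrite -(nth_take _ lt_ij) eq_take nth_take.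
rewrite (rot_fixed_nth x0 fix1) ?le_ji ?lt_i //.
by rewrite (rot_fixed_nth x0 fix2) ?le_ji -?eq_size ?lt_i // IH //; lia.
Qed.

Definition to_tuple N (s : seq bool) : N.-tuple bool := insubd (nseq_tuple N false) s.

Lemma to_tupleK N s : size s = N -> to_tuple N s = s :> seq bool.
Proof. by move=> sz; rewrite val_insubd sz eqxx. Qed.

Lemma card_rot_fixed L j : 0 < j < L -> #|[set s : L.-tuple bool | rot j s == s]| <= 2 ^ L./2.
Proof.
move=> /andP[j_gt0 lt_jL]; set F := [set s | _].
have [p [p_gt0 le_pL fixF]] : exists p, [/\ 0 < p, p <= L./2 &
    forall s : L.-tuple bool, s \in F -> rot p s = s].
  have [le_j|lt_j] := leqP j (L - j).
    by exists j; split=> // [|s /[!inE]/eqP//]; rewrite geq_half_double -muln2; lia.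
  exists (L - j); split; [lia | rewrite geq_half_double -muln2; lia | ].
  by move=> s /[!inE]/eqP fix_s; have := rotK j s; rewrite /rotr fix_s size_tuple.
have le_p : p <= L by apply: leq_trans le_pL _; rewrite -{2}(odd_double_half L) -addnn; lia.
have take_inj : {in F &, injective (fun s : L.-tuple bool => to_tuple p (take p s))}.
  move=> s1 s2 F1 F2 /(congr1 val) /=; rewrite !to_tupleK ?size_takel ?size_tuple // => eq_take.
  by apply: val_inj; apply: (rot_fixed_eq p_gt0); rewrite ?size_tuple ?fixF.
rewrite -(card_in_imset take_inj) (leq_trans (max_card _)) // card_tuple card_bool.
exact: leq_pexp2l.
Qed.

Definition periodic L (s : L.-tuple bool) : bool :=
  [exists j : 'I_L, (0 < j) && (rot j s == s)].

Definition rot_weight L (s : L.-tuple bool) : nat := if periodic s then L else 1.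

Lemma periodic_of_rot_eq L (s : seq bool) (v : L.-tuple bool) (a b : 'I_L) :
  size s = L -> a < b -> rot a s = v -> rot b s = v -> periodic v.
Proof.
move=> sz lt_ab sa sb; have lt_baL : b - a < L by have := ltn_ord b; lia.
apply/existsP; exists (Ordinal lt_baL).
by rewrite /= subn_gt0 lt_ab -{1}sa -rotD subnK ?sb ?eqxx // ?sz; apply: ltnW.
Qed.

Lemma card_rot_eq_le_weight L (s : seq bool) (v : L.-tuple bool) : size s = L ->
  #|[set j : 'I_L | rot j s == v]| <= rot_weight v.
Proof.
move=> sz; rewrite /rot_weight; case: ifP => [_|aperiodic].
  by rewrite (leq_trans (max_card _)) ?card_ord.
rewrite leqNgt; apply/negP => /card_gt1P[a [b []]]; rewrite !inE => /eqP sa /eqP sb ab.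
case: (ltngtP a b) => [lt_ab|lt_ba|/val_inj eq_ab]; last by rewrite eq_ab eqxx in ab.
  by rewrite (periodic_of_rot_eq sz lt_ab sa sb) in aperiodic.
by rewrite (periodic_of_rot_eq sz lt_ba sb sa) in aperiodic.
Qed.

Lemma card_periodic L : #|[set s : L.-tuple bool | periodic s]| <= L * 2 ^ L./2.
Proof.
rewrite -sum1_card.
apply: (@leq_trans (\sum_(s : L.-tuple bool) \sum_(j : 'I_L | 0 < j) (rot j s == s))).
  rewrite big_mkcond /=; apply: leq_sum => s _; rewrite inE.
  case: ifP => // /existsP[j /andP[j_gt0 fix_j]].
  by rewrite (bigD1 j) //= fix_j.
rewrite exchange_big /= -[L in L * _]card_ord -sum_nat_const.
rewrite [X in _ <= X](bigID (fun j : 'I_L => 0 < j)) /=; apply: leq_trans _ (leq_addr _ _).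
apply: leq_sum => j j_gt0.
have -> : \sum_(s : L.-tuple bool) (rot j s == s) = #|[set s : L.-tuple bool | rot j s == s]|.
  by rewrite -sum1_card [RHS]big_mkcond; apply: eq_bigr => s _; rewrite inE; case: (_ == _).
by apply: card_rot_fixed; rewrite j_gt0 ltn_ord.
Qed.

Lemma four_sq_le_exp2 h : 8 <= h -> 4 * h ^ 2 <= 2 ^ h.
Proof.
move=> h_ge8; rewrite -(subnKC h_ge8); elim: (h - 8) => // d IH.
by rewrite addnS [2 ^ _]expnS; nia.
Qed.

Lemma sum_rot_weight L : 16 <= L -> \sum_(s : L.-tuple bool) rot_weight s <= 2 ^ L.+1.
Proof.
move=> L_ge16; rewrite (bigID (@periodic L)) /=.
rewrite (eq_bigr (fun=> L)) => [|s]; last by rewrite /rot_weight => ->.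
rewrite [X in _ + X](eq_bigr (fun=> 1)) => [|s]; last by rewrite /rot_weight => /negbTE->.
rewrite !sum_nat_cond_const muln1 expnS mul2n -addnn leq_add //; last first.
  by rewrite (leq_trans (max_card _)) // card_tuple card_bool.
have sq_L : L * L <= 2 ^ uphalf L.
  apply: leq_trans (four_sq_le_exp2 _); last by rewrite uphalf_half; lia.
  by have := uphalfK L; nia.
have exp_L : 2 ^ L = 2 ^ uphalf L * 2 ^ L./2.
  by rewrite -expnD uphalf_half -addnA addnn odd_double_half.
apply: (@leq_trans (L * 2 ^ L./2 * L)); first by rewrite leq_mul2r card_periodic orbT.
by rewrite exp_L mulnAC leq_mul2r sq_L orbT.
Qed.

Lemma card_ffun_family (I J : finType) (A : I -> {set J}) :
  #|[set f : {ffun I -> J} | [forall i, f i \in A i]]| = \prod_i #|A i|.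
Proof.
transitivity #|(family (fun i => mem (A i)) : simpl_pred {ffun I -> J})|.
  by apply: eq_card => f; rewrite inE; apply/forallP/familyP.
by rewrite card_family foldrE big_image.
Qed.

Section Counting.
Variables (n t k L m : nat) (C : {set n.-tuple bool}).
Hypotheses (n_split : n = k * L + m) (L_ge16 : 16 <= L) (k_gt0 : 0 < k)
  (t_ge : (2 * k).-1 + (m != 0) <= t) (C_BRC : is_BRC t C).

Definition signature (x : n.-tuple bool) (r : {ffun 'I_k -> 'I_L}) :
    {ffun 'I_k -> L.-tuple bool} * m.-tuple bool :=
  ([ffun i => to_tuple L (rot (r i) (block L x i))], to_tuple m (drop (k * L) x)).

Lemma size_block_tuple (x : n.-tuple bool) (i : 'I_k) : size (block L x i) = L.
Proof.
by rewrite size_block // size_tuple n_split (leq_trans _ (leq_addr _ _)) // leq_mul2r ltn_ord orbT.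
Qed.

Lemma size_drop_blocks (x : n.-tuple bool) : size (drop (k * L) x) = m.
Proof. by rewrite size_drop size_tuple n_split addKn. Qed.

Lemma signature_inj (x x' : n.-tuple bool) r r' : x \in C -> x' \in C ->
  signature x r = signature x' r' -> x = x'.
Proof.
move=> xC x'C; rewrite /signature => -[/ffunP sig_blocks /(congr1 val) /=].
rewrite !to_tupleK ?size_drop_blocks // => eq_drop.
apply: BRC_break_equiv_eq C_BRC xC x'C _.
apply: break_equiv_le (break_equiv_rot_blocks _ _ _ _ eq_drop) => //.
- by rewrite -size_eq0 size_drop_blocks.
- by apply: leq_trans L_ge16.
- by rewrite size_tuple n_split leq_addr.
move=> i lt_ik; have /(congr1 val) /= := sig_blocks (Ordinal lt_ik).
by rewrite !ffunE !to_tupleK ?size_rot ?size_block_tuple //; apply: rot_eq_rot_ex.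
Qed.

Lemma card_signature_fiber (z : {ffun 'I_k -> L.-tuple bool} * m.-tuple bool) :
  #|[set p | (p.1 \in C) && (signature p.1 p.2 == z)]| <= \prod_(i < k) rot_weight (z.1 i).
Proof.
set F := [set p | _].
have [->|[[x0 r0]]] := set_0Vmem F; first by rewrite cards0.
rewrite inE /= => /andP[x0C /eqP sig0].
pose A (i : 'I_k) := [set j : 'I_L | rot j (block L x0 i) == z.1 i].
have sub_F : F \subset [set (x0, r) | r in [set r : {ffun 'I_k -> 'I_L} | [forall i, r i \in A i]]].
  apply/subsetP => -[x r]; rewrite inE /= => /andP[xC /eqP sig].
  have eq_x := signature_inj xC x0C (etrans sig (esym sig0)); subst x.
  apply/imsetP; exists r => //; rewrite inE; apply/forallP => i.
  by rewrite inE -sig /= ffunE to_tupleK ?size_rot ?size_block_tuple.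
apply: leq_trans (subset_leq_card sub_F) _; apply: leq_trans (leq_imset_card _ _) _.
rewrite card_ffun_family; apply: leq_prod => i _.
exact: card_rot_eq_le_weight (size_block_tuple x0 i).
Qed.

Lemma card_BRC_exp_bound : #|C| * L ^ k <= 2 ^ (n + k).
Proof.
have -> : #|C| * L ^ k = #|[set p : n.-tuple bool * {ffun 'I_k -> 'I_L} | p.1 \in C]|.
  rewrite (_ : [set p | _] = setX C setT); last by apply/setP => -[x r]; rewrite !inE andbT.
  by rewrite cardsX cardsT card_ffun !card_ord.
rewrite -sum1_card (partition_big (fun p => signature p.1 p.2) xpredT) //=.
apply: (@leq_trans (\sum_(z : {ffun 'I_k -> L.-tuple bool} * m.-tuple bool)
                     \prod_(i < k) rot_weight (z.1 i))).
  apply: leq_sum => z _; rewrite sum_nat_cond_const muln1.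
  apply: leq_trans (card_signature_fiber z); apply: subset_leq_card.
  by apply/subsetP => p; rewrite !inE.
rewrite -(pair_bigA _ (fun (f : {ffun 'I_k -> L.-tuple bool}) (_ : m.-tuple bool) =>
  \prod_(i < k) rot_weight (f i))) /=.
rewrite (eq_bigr (fun f : {ffun 'I_k -> L.-tuple bool} =>
  2 ^ m * \prod_(i < k) rot_weight (f i))) => [|f _]; last first.
  by rewrite sum_nat_const card_tuple card_bool mulnC.
rewrite -big_distrr /= -(bigA_distr_bigA (fun _ s => rot_weight s)) /=.
apply: leq_trans (leq_mul (leqnn _) (leq_prod (fun i _ => sum_rot_weight L_ge16))) _.
by rewrite prod_nat_const card_ord -expnM -expnD n_split; apply: leq_pexp2l => //; lia.
Qed.

End Counting.

Section RealBounds.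
Local Open Scope R_scope.

Lemma INR_leq (a b : nat) : (a <= b)%N -> INR a <= INR b.
Proof. by move/leP; apply: le_INR. Qed.

Lemma INR_expn a b : INR (a ^ b)%N = INR a ^ b.
Proof. by elim: b => // b IH; rewrite expnS mult_INR IH. Qed.

Lemma ln_le_ln x y : 0 < x -> x <= y -> ln x <= ln y.
Proof. by move=> x_gt0 [/(ln_increasing _ _ x_gt0)/Rlt_le|->] //; apply: Rle_refl. Qed.

Lemma ln2_lt1 : ln 2 < 1.
Proof. by rewrite -[X in _ < X]ln_exp; apply: ln_increasing; [lra | have := exp_ineq1 1; lra]. Qed.

Lemma ln2_ge_third : 1 <= 3 * ln 2.
Proof.
have -> : 3 * ln 2 = ln (2 * (2 * 2)) by rewrite !ln_mult; lra.
rewrite -[1]ln_exp; apply: ln_le_ln; [exact: exp_pos | have := exp_le_3; lra].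
Qed.

Lemma ln_ge_ln16 (L : nat) : (16 <= L)%N -> 4 * ln 2 <= ln (INR L).
Proof.
move=> /INR_leq; rewrite [INR 16]/= => L_ge.
have -> : 4 * ln 2 = ln (2 * (2 * (2 * 2))) by rewrite !ln_mult; lra.
by apply: ln_le_ln; lra.
Qed.

Lemma INR2 : INR 2 = 2.
Proof. by rewrite /=; lra. Qed.

Lemma log2_bound_of_exp_bound (n k L c : nat) : (0 < c)%N -> (2 <= L)%N ->
  (c * L ^ k <= 2 ^ (n + k))%N -> INR k * (ln (INR L) - ln 2) <= INR n - ln (INR c) / ln 2.
Proof.
move=> /INR_leq c_ge1 /INR_leq; rewrite INR2 [INR 1]/= in c_ge1 * => L_ge2 /INR_leq.
have prod_pos : 0 < INR c * INR L ^ k by apply: Rmult_lt_0_compat; [|apply: pow_lt]; lra.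
rewrite mult_INR !INR_expn INR2 pow_add => /(ln_le_ln prod_pos).
rewrite !ln_mult ?ln_pow; try (apply: pow_lt); try lra.
have [ln2_pos ln2_1] := (ln_lt_2, ln2_lt1).
have k_ln_ge0 : 0 <= INR k * (ln (INR L) - ln 2).
  by apply: Rmult_le_pos; [apply: pos_INR | have := ln_le_ln _ L_ge2; lra].
set u := ln (INR c) / ln 2; have -> : ln (INR c) = u * ln 2 by rewrite /u; field; lra.
nra.
Qed.

Lemma tlog_le_of_t_le_3k (n t k L : nat) : (0 < n)%N -> (0 < k)%N -> (k <= t <= 3 * k)%N ->
  (n <= 2 * k * L)%N -> (16 <= L)%N ->
  INR t * ln (INR n / INR t) <= 32 * (INR k * (ln (INR L) - ln 2)).
Proof.
move=> /INR_leq n_gt0 /INR_leq k_ge1 /andP[/INR_leq k_le_t /INR_leq t_le] /INR_leq n_le L_ge16.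
rewrite [INR 1]/= in n_gt0 k_ge1; rewrite mult_INR [INR 3]/= in t_le.
rewrite !mult_INR INR2 in n_le; have lnL := ln_ge_ln16 L_ge16.
have ln2_pos := ln_lt_2; set q := INR n / INR t.
have q_pos : 0 < q by apply: Rdiv_lt_0_compat; lra.
have [lnq_le0|lnq_gt0] := Rle_or_lt (ln q) 0.
  have : 0 <= INR k * (ln (INR L) - ln 2) by apply: Rmult_le_pos; lra.
  nra.
have q_t : q * INR t = INR n by rewrite /q; field; lra.
have q_le : q <= 2 * INR L by nra.
have lnq_le : ln q <= ln 2 + ln (INR L) by rewrite -ln_mult; [apply: ln_le_ln | |]; nra.
nra.
Qed.

Lemma tlog_le_of_n_le_32k (n t k L : nat) : (0 < n)%N -> (0 < t)%N -> (n <= 32 * k)%N ->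
  (16 <= L)%N -> INR t * ln (INR n / INR t) <= 32 * (INR k * (ln (INR L) - ln 2)).
Proof.
move=> /INR_leq n_gt0 /INR_leq t_gt0 /INR_leq n_le L_ge16.
rewrite [INR 1]/= in n_gt0 t_gt0; rewrite mult_INR [INR 32]/= in n_le.
set q := INR n / INR t.
have q_pos : 0 < q by apply: Rdiv_lt_0_compat; lra.
have q_t : q * INR t = INR n by rewrite /q; field; lra.
have lnq_le : ln q <= q - 1.
  by have := exp_ineq1_le (ln q); rewrite exp_ln //; lra.
have lnL_ge1 : 1 <= ln (INR L) - ln 2 by have := ln_ge_ln16 L_ge16; have := ln2_ge_third; lra.
have : INR k <= INR k * (ln (INR L) - ln 2) by have := pos_INR k; nra.
nra.
Qed.

Lemma BRC_redundancy_blocks (n t k L m : nat) (C : {set n.-tuple bool}) :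
  n = (k * L + m)%N -> (16 <= L)%N -> (0 < k)%N -> ((2 * k).-1 + (m != 0) <= t)%N ->
  is_BRC t C -> (0 < #|C|)%N ->
  INR k * (ln (INR L) - ln 2) <= INR n - ln (INR #|C|) / ln 2.
Proof.
move=> n_split L_ge16 k_gt0 t_ge C_BRC C_gt0.
apply: log2_bound_of_exp_bound => //; first exact: leq_trans L_ge16.
exact: card_BRC_exp_bound n_split L_ge16 k_gt0 t_ge C_BRC.
Qed.

End RealBounds.

Theorem theorem1 :
  exists (c : R) (N0 : nat), Rlt 0 c /\
    forall (n t : nat) (C : {set n.-tuple bool}),
      (N0 <= n)%N -> (0 < t)%N -> (0 < #|C|)%N -> is_BRC t C ->
      Rle (Rmult (Rmult c (INR t)) (ln (Rdiv (INR n) (INR t)))) (Rminus (INR n) (Rdiv (ln (INR #|C|)) (ln 2))).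
Proof.
exists (1 / 32 : R), 64; split=> [|n t C n_ge64 t_gt0 C_gt0 C_BRC]; first lra.
set k := minn (maxn 1 t./2) (n %/ 16).
have k_gt0 : (0 < k)%N by rewrite leq_min leq_maxl divn_gt0 //; lia.
have k16_le_n : (k * 16 <= n)%N by rewrite -leq_divRL // geq_minr.
have L_ge16 : (16 <= n %/ k)%N by rewrite leq_divRL // mulnC.
have n_split : n = k * (n %/ k) + n %% k by rewrite mulnC -divn_eq.
have t_ge : ((2 * k).-1 + (n %% k != 0) <= t)%N.
  (* For k = 1 there is no remainder; this is what covers t = 1. *)
  have [->|k_gt1] := eqVneq k 1; first by rewrite modn1.
  have : (k <= t./2)%N by move: (geq_minl (maxn 1 t./2) (n %/ 16)); rewrite -/k; lia.
  by rewrite -(odd_double_half t); case: (n %% k != 0); lia.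
have := BRC_redundancy_blocks n_split L_ge16 k_gt0 t_ge C_BRC C_gt0.
suff : Rle (INR t * ln (INR n / INR t)) (32 * (INR k * (ln (INR (n %/ k)) - ln 2))) by lra.
have n_gt0 : (0 < n)%N by lia.
have [le_half|lt_half] := leqP (maxn 1 t./2) (n %/ 16).
- apply: tlog_le_of_t_le_3k; rewrite // /k (minn_idPl le_half).
  + by rewrite -(odd_double_half t) in t_gt0 *; apply/andP; split; lia.
  + have := ltn_ceil n k_gt0; rewrite /k (minn_idPl le_half); lia.
- apply: tlog_le_of_n_le_32k; rewrite // /k (minn_idPr (ltnW lt_half)).
  by have := ltn_ceil n (isT : (0 < 16)%N); lia.
Qed.
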